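(* Let $\alpha\in\mathbb{R}$. Then $\alpha$ is a weak-Bryuno number if and only if $\alpha$ is a Bryuno number.
   Context: Dimension $d=1$. For $x\in\mathbb{R}$, $\|x\|:=\min_{l\in\mathbb{Z}}|x-l|$. Bryuno: with $\Omega_\alpha(N):=\min_{\ell\in\mathbb{Z},\,0<|\ell|\le N}\|\alpha\ell\|$, $\alpha$ is a Bryuno number if $\sum_{k\ge1}2^{-k}\log\frac{1}{\Omega_\alpha(2^k)}<+\infty$ (this requires $\alpha$ irrational). Weak-Bryuno (with $\mathbb{S}^0=\{-1,1\}$): for $\ell\in\mathbb{Z}$, $\beta\in\{\pm1\}$, $\delta\in\mathbb{R}$, $\Phi(\ell,\beta,\delta):=e^{2\pi|\ell\beta|\delta}=e^{2\pi|\ell|\delta}$. Given $C>0$, $N\in\mathbb{N}$ and $c=\{c_n\}\in\ell^1(\mathbb{R}^+)$ let $g(c,n,\ell):=1$ if $2^n<|\ell|\le2^{n+1}$, $:=e^{-2^nc_n}$ if $0<|\ell|\le2^n$, $:=0$ otherwise. Fix $\mathfrak{d}>0$, set $\delta_{\beta,n}:=\mathfrak{d}$ for $n=1,\dots,N$, and for $n\ge N$ recursively $\tilde\delta_{\beta,n+1}:=\max\{\delta\le\delta_{\beta,n}:\frac{\Phi(\ell,\beta,\delta)}{\|\alpha\ell\|}g(c,n,\ell)\le\max_{\bar\beta\in\{\pm1\}}\Phi(\ell,\bar\beta,\delta_{\bar\beta,n})\ \forall\ell\in\mathbb{Z},\ 0<|\ell|\le2^{n+1}\}$ and $\delta_{\beta,n+1}:=\min_{\bar\beta\in\{\pm1\},|\beta-\bar\beta|<e^{-2^nc_n}}\tilde\delta_{\bar\beta,n+1}$.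 $\alpha$ is a weak-Bryuno number if for every $\mathfrak{d}>0$ there exist $C$, $c$, $N$ with $\inf_{\beta\in\{\pm1\}}\inf_{n\in\mathbb{N}}\delta_{\beta,n}>0$. *)

From Stdlib Require Import Reals Lra Lia ZArith List.
From Coquelicot Require Import Coquelicot.
Open Scope R_scope.

(** ‖x‖ = min_{l ∈ Z} |x - l| : distance to the nearest integer.
    [up x] is the least integer > x, so [up x - 1] is the floor of x and the
    nearest integer is one of [up x - 1], [up x]. *)
Definition dist_int (x : R) : R :=
  Rmin (x - IZR (up x - 1)) (IZR (up x) - x).

Lemma dist_int_le (x : R) (l : Z) : dist_int x <= Rabs (x - IZR l).
Proof.
  unfold dist_int. destruct (archimed x) as [H1 H2].
  rewrite minus_IZR.
  destruct (Z_le_gt_dec l (up x - 1)) as [Hl | Hl].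
  - apply IZR_le in Hl. rewrite minus_IZR in Hl.
    eapply Rle_trans; [apply Rmin_l|]. rewrite Rabs_right; lra.
  - assert (Hl' : (up x <= l)%Z) by lia. apply IZR_le in Hl'.
    eapply Rle_trans; [apply Rmin_r|]. rewrite Rabs_left1; lra.
Qed.

Lemma dist_int_attained (x : R) : exists l : Z, dist_int x = Rabs (x - IZR l).
Proof.
  unfold dist_int. destruct (archimed x) as [H1 H2].
  apply Rmin_case.
  - exists (up x - 1)%Z. rewrite minus_IZR in *. rewrite Rabs_right; lra.
  - exists (up x). rewrite Rabs_left1; lra.
Qed.

Definition nonzero_range (N : nat) : list Z :=
  filter (fun l => negb (Z.eqb l 0))
    (map (fun i => (Z.of_nat i - Z.of_nat N)%Z) (seq 0 (2 * N + 1))).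

(** Ω_α(N) = min_{0 < |l| <= N} ‖α l‖ (for N >= 1 the list is nonempty and all
    values are <= 1/2, so the initial value 1 of the fold is never the result). *)
Definition Omega (alpha : R) (N : nat) : R :=
  fold_right Rmin 1 (map (fun l => dist_int (alpha * IZR l)) (nonzero_range N)).

(** Bryuno: the series Σ_{k>=1} 2^{-k} log(1/Ω_α(2^k)) is finite
    (which requires Ω_α(2^k) > 0 for all k >= 1, i.e. α irrational). *)
Definition Bryuno (alpha : R) : Prop :=
  (forall k : nat, (1 <= k)%nat -> 0 < Omega alpha (2 ^ k)) /\
  ex_series (fun k : nat => / 2 ^ (k + 1) * ln (/ Omega alpha (2 ^ (k + 1)))).

Definition Phi (l : Z) (beta delta : R) : R :=
  exp (2 * PI * Rabs (IZR l * beta) * delta).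

Definition g (c : nat -> R) (n : nat) (l : Z) : R :=
  let a := Rabs (IZR l) in
  if Rlt_dec (2 ^ n) a then (if Rle_dec a (2 ^ (n + 1)) then 1 else 0)
  else if Rlt_dec 0 a then exp (- (2 ^ n * c n))
  else 0.

Definition S0 (beta : R) : Prop := beta = 1 \/ beta = -1.

(** The admissibility condition defining δ̃_{β,n+1}: δ <= δ_{β,n} and
    Φ(l,β,δ)/‖αl‖ · g(c,n,l) <= max_{β̄} Φ(l,β̄,δ_{β̄,n}) for all 0<|l|<=2^{n+1};
    the quotient by ‖αl‖ is required to be a (finite) real, i.e. ‖αl‖ > 0. *)
Definition admissible (alpha : R) (c : nat -> R) (delta : R -> nat -> R)
    (beta : R) (n : nat) (d : R) : Prop :=
  d <= delta beta n /\
  forall l : Z, 0 < Rabs (IZR l) <= 2 ^ (n + 1) ->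
    0 < dist_int (alpha * IZR l) /\
    Phi l beta d / dist_int (alpha * IZR l) * g c n l
      <= Rmax (Phi l 1 (delta 1 n)) (Phi l (-1) (delta (-1) n)).

Definition delta_recursion (alpha dd : R) (c : nat -> R) (N : nat)
    (delta deltat : R -> nat -> R) : Prop :=
  (forall beta n, S0 beta -> (1 <= n <= N)%nat -> delta beta n = dd) /\
  (forall beta n, S0 beta -> (N <= n)%nat ->
     (* δ̃_{β,n+1} = max { δ : admissible δ } *)
     admissible alpha c delta beta n (deltat beta (n + 1)%nat) /\
     (forall d, admissible alpha c delta beta n d -> d <= deltat beta (n + 1)%nat)) /\
  (forall beta n, S0 beta -> (N <= n)%nat ->
     (* δ_{β,n+1} = min over β̄ ∈ S^0 with |β - β̄| < e^{-2^n c_n} of δ̃_{β̄,n+1} *)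
     (forall betab, S0 betab -> Rabs (beta - betab) < exp (- (2 ^ n * c n)) ->
        delta beta (n + 1)%nat <= deltat betab (n + 1)%nat) /\
     (exists betab, S0 betab /\ Rabs (beta - betab) < exp (- (2 ^ n * c n)) /\
        delta beta (n + 1)%nat = deltat betab (n + 1)%nat)).

Definition weak_Bryuno (alpha : R) : Prop :=
  forall dd : R, 0 < dd ->
  exists C : R, 0 < C /\
  exists c : nat -> R, (forall n, 0 <= c n) /\ ex_series c /\
  exists N : nat, (1 <= N)%nat /\
  exists delta deltat : R -> nat -> R,
    delta_recursion alpha dd c N delta deltat /\
    exists eps : R, 0 < eps /\
      forall beta n, S0 beta -> (1 <= n)%nat -> eps <= delta beta n.

(* Phi (l, beta, delta) only sees |beta| = 1, and admissibility at step n is a finite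
   intersection of half-lines {d <= b_l}, so the maximal admissible value exists.

   Bryuno => weak-Bryuno: take c_n = 2^-n log (1 / Omega (2^n)).  Then
   delta_n - 2^-(n+1) log (1 / Omega (2^(n+1))) is admissible: on the dyadic shell
   2^n < |l| <= 2^(n+1) because 2 pi |l| >= 2^(n+1), and inside it because there
   g = exp (- 2^n c_n) = Omega (2^n).  So delta_n drops at most by a tail of the Bryuno series,
   which is small from some N on.

   Weak-Bryuno => Bryuno: with M_n = max_beta delta_(beta,n), admissibility on the shell gives
   log (1 / ||alpha l||) <= 2 pi |l| (M_n - M_(n+1)).  Either Omega (2^(n+1)) is attained on the
   shell or it equals Omega (2^n); hence the Bryuno terms satisfy
   a_(n+1) <= a_n / 2 + 2 pi (M_n - M_(n+1)), and as M_n is nonincreasing and bounded below by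
   the infimum of the delta's, the series converges. *)

From Stdlib Require Import Reals Lra Lia ZArith List ClassicalEpsilon.
From Coquelicot Require Import Coquelicot.
Open Scope R_scope.

Lemma exp_le_compat (x y : R) : x <= y -> exp x <= exp y.
Proof. intros [Hlt | ->]; [left; apply exp_increasing |]; lra. Qed.

Lemma ln_le_iff (x y : R) : 0 < x -> 0 < y -> ln x <= ln y <-> x <= y.
Proof.
  intros Hx Hy. split; [| apply ln_le, Hx].
  intros Hln. destruct (Rle_lt_dec x y) as [Hle | Hlt]; [exact Hle |].
  pose proof (ln_increasing y x Hy Hlt). lra.
Qed.

Lemma exp_neg_ln_inv (w : R) : 0 < w -> exp (- ln (/ w)) = w.
Proof. intros Hw. rewrite ln_Rinv, Ropp_involutive by exact Hw. apply exp_ln, Hw. Qed.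

Lemma ln_inv_ge0 (w : R) : 0 < w <= 1 -> 0 <= ln (/ w).
Proof.
  intros [Hw Hw1]. rewrite ln_Rinv by exact Hw.
  pose proof (ln_le w 1 Hw Hw1). rewrite ln_1 in *. lra.
Qed.

Lemma exp_mul_le_iff (a K B d : R) : 0 < a -> 0 < K -> 0 < B ->
  exp (a * d) * K <= B <-> d <= ln (B / K) / a.
Proof.
  intros Ha HK HB.
  rewrite <- (ln_le_iff _ _ (Rmult_lt_0_compat _ _ (exp_pos _) HK) HB).
  rewrite ln_mult, ln_exp, ln_div, <- Rle_div_r by (try apply exp_pos; assumption).
  split; lra.
Qed.

(** * Half-lines of admissible values *)

Definition down_ray (P : R -> Prop) : Prop := exists b, forall d, P d <-> d <= b.

Lemma down_ray_le (x : R) : down_ray (fun d => d <= x).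
Proof. exists x. tauto. Qed.

Lemma down_ray_ext (P Q : R -> Prop) :
  (forall d, P d <-> Q d) -> down_ray P -> down_ray Q.
Proof. intros HPQ [b Hb]. exists b. intros d. rewrite <- HPQ. apply Hb. Qed.

Lemma down_ray_and (P Q : R -> Prop) :
  down_ray P -> down_ray Q -> down_ray (fun d => P d /\ Q d).
Proof.
  intros [b Hb] [b' Hb']. exists (Rmin b b'). intros d.
  rewrite Hb, Hb'. unfold Rmin. destruct (Rle_dec b b'); split; lra.
Qed.

Lemma down_ray_and_Forall {A : Type} (Q : R -> Prop) (P : A -> R -> Prop) (s : list A) :
  down_ray Q -> (forall a, In a s -> down_ray (P a)) ->
  down_ray (fun d => Q d /\ forall a, In a s -> P a d).
Proof.
  revert Q. induction s as [| a s IH]; intros Q HQ Hs.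
  - apply (down_ray_ext Q); [| exact HQ]. simpl. tauto.
  - apply (down_ray_ext (fun d => (Q d /\ P a d) /\ forall x, In x s -> P x d)).
    + intros d. simpl. split; [firstorder congruence | firstorder].
    + apply IH; [apply down_ray_and; [exact HQ | apply Hs; left; reflexivity] |].
      intros x Hx. apply Hs. right. exact Hx.
Qed.

Definition ray_max (P : R -> Prop) : R :=
  epsilon (inhabits 0) (fun b => forall d, P d <-> d <= b).

Lemma ray_maxP (P : R -> Prop) : down_ray P -> forall d, P d <-> d <= ray_max P.
Proof. intros HP. exact (epsilon_spec (inhabits 0) _ HP). Qed.

(** * The minimum Omega *)

Section FoldRmin.
Variables (A : Type) (f : A -> R).

Lemma fold_Rmin_le (s : list A) (x : A) : In x s -> fold_right Rmin 1 (map f s) <= f x.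
Proof.
  induction s as [| a s IH]; simpl; [tauto |].
  intros [-> | Hx]; [apply Rmin_l |]. eapply Rle_trans; [apply Rmin_r | auto].
Qed.

Lemma fold_Rmin_le_1 (s : list A) : fold_right Rmin 1 (map f s) <= 1.
Proof. induction s; simpl; [lra |]. eapply Rle_trans; [apply Rmin_r | assumption]. Qed.

Lemma fold_Rmin_cases (s : list A) :
  fold_right Rmin 1 (map f s) = 1 \/
  exists x, In x s /\ fold_right Rmin 1 (map f s) = f x.
Proof.
  induction s as [| a s IH]; simpl; [auto |].
  apply Rmin_case; [right; exists a; auto |].
  destruct IH as [H | [x [Hx E]]]; [left | right; exists x]; auto.
Qed.

Lemma fold_Rmin_pos (s : list A) :
  (forall x, In x s -> 0 < f x) -> 0 < fold_right Rmin 1 (map f s).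
Proof. induction s; simpl; intros H; [lra |]. apply Rmin_pos; auto. Qed.

End FoldRmin.

Lemma INR_pow2 (k : nat) : INR (2 ^ k) = 2 ^ k.
Proof. rewrite pow_INR. reflexivity. Qed.

Lemma In_nonzero_range (N : nat) (l : Z) :
  In l (nonzero_range N) <-> 0 < Rabs (IZR l) <= INR N.
Proof.
  rewrite Rabs_Zabs, INR_IZR_INZ. unfold nonzero_range.
  rewrite filter_In, in_map_iff, Bool.negb_true_iff, Z.eqb_neq. split.
  - intros [[i [<- Hi]] Hl]. apply in_seq in Hi.
    split; [apply IZR_lt | apply IZR_le]; lia.
  - intros [Hl HN]. apply lt_IZR in Hl. apply le_IZR in HN. split; [| lia].
    exists (Z.to_nat (l + Z.of_nat N)). rewrite in_seq. lia.
Qed.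

Lemma Omega_le_dist (alpha : R) (N : nat) (l : Z) :
  0 < Rabs (IZR l) <= INR N -> Omega alpha N <= dist_int (alpha * IZR l).
Proof.
  intros Hl. apply (fold_Rmin_le _ (fun l => dist_int (alpha * IZR l))).
  apply In_nonzero_range, Hl.
Qed.

Lemma Omega_le_1 (alpha : R) (N : nat) : Omega alpha N <= 1.
Proof. apply fold_Rmin_le_1. Qed.

Lemma Omega_pos (alpha : R) (N : nat) :
  (forall l, 0 < Rabs (IZR l) <= INR N -> 0 < dist_int (alpha * IZR l)) ->
  0 < Omega alpha N.
Proof.
  intros H. apply (fold_Rmin_pos _ (fun l => dist_int (alpha * IZR l))).
  intros l Hl. apply H, In_nonzero_range, Hl.
Qed.

Lemma Omega_cases (alpha : R) (N : nat) :
  Omega alpha N = 1 \/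
  exists l, 0 < Rabs (IZR l) <= INR N /\ Omega alpha N = dist_int (alpha * IZR l).
Proof.
  destruct (fold_Rmin_cases _ (fun l => dist_int (alpha * IZR l)) (nonzero_range N))
    as [E | [l [Hl E]]]; [left; exact E | right].
  exists l. rewrite <- In_nonzero_range. auto.
Qed.

Lemma Omega_antimono (alpha : R) (M N : nat) :
  (M <= N)%nat -> Omega alpha N <= Omega alpha M.
Proof.
  intros HMN. apply le_INR in HMN.
  destruct (Omega_cases alpha M) as [-> | [l [Hl ->]]]; [apply Omega_le_1 |].
  apply Omega_le_dist. lra.
Qed.

Lemma Omega_extend_cases (alpha : R) (M N : nat) : (M <= N)%nat ->
  Omega alpha N = Omega alpha M \/
  exists l, INR M < Rabs (IZR l) <= INR N /\ Omega alpha N = dist_int (alpha * IZR l).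
Proof.
  intros HMN. pose proof (Omega_antimono alpha M N HMN) as Hle.
  destruct (Omega_cases alpha N) as [E | [l [Hl E]]].
  - left. pose proof (Omega_le_1 alpha M). lra.
  - destruct (Rle_lt_dec (Rabs (IZR l)) (INR M)) as [Hsmall | Hbig].
    + left. pose proof (Omega_le_dist alpha M l (conj (proj1 Hl) Hsmall)). lra.
    + right. exists l. split; [split |]; tauto.
Qed.

Lemma S0_1 : S0 1.
Proof. left. reflexivity. Qed.

Lemma S0_m1 : S0 (-1).
Proof. right. reflexivity. Qed.

Lemma Phi_S0 (l : Z) (beta d : R) :
  S0 beta -> Phi l beta d = exp (2 * PI * Rabs (IZR l) * d).
Proof.
  intros Hb. unfold Phi. rewrite Rabs_mult.
  destruct Hb as [-> | ->]; [rewrite Rabs_R1 | rewrite Rabs_m1]; rewrite Rmult_1_r; reflexivity.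
Qed.

Lemma g_shell (c : nat -> R) (n : nat) (l : Z) :
  2 ^ n < Rabs (IZR l) <= 2 ^ (n + 1) -> g c n l = 1.
Proof.
  intros Hl. unfold g.
  destruct (Rlt_dec (2 ^ n) (Rabs (IZR l))); [| lra].
  destruct (Rle_dec (Rabs (IZR l)) (2 ^ (n + 1))); [reflexivity | lra].
Qed.

Lemma g_inner (c : nat -> R) (n : nat) (l : Z) :
  0 < Rabs (IZR l) <= 2 ^ n -> g c n l = exp (- (2 ^ n * c n)).
Proof.
  intros Hl. unfold g.
  destruct (Rlt_dec (2 ^ n) _); [lra |]. destruct (Rlt_dec 0 _); [reflexivity | lra].
Qed.

Lemma g_pos (c : nat -> R) (n : nat) (l : Z) :
  0 < Rabs (IZR l) <= 2 ^ (n + 1) -> 0 < g c n l.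
Proof.
  intros Hl. destruct (Rlt_dec (2 ^ n) (Rabs (IZR l))).
  - rewrite g_shell by lra. lra.
  - rewrite g_inner by lra. apply exp_pos.
Qed.

Lemma admissible_S0 (alpha : R) (c : nat -> R) (D : nat -> R) (beta : R) (n : nat) (d : R) :
  S0 beta ->
  admissible alpha c (fun _ k => D k) beta n d <-> admissible alpha c (fun _ k => D k) 1 n d.
Proof.
  intros Hb.
  assert (E : forall l, Phi l beta d = Phi l 1 d).
  { intros l. rewrite !Phi_S0 by (exact Hb || exact S0_1). reflexivity. }
  unfold admissible. setoid_rewrite E. reflexivity.
Qed.

Lemma admissible_down_ray (alpha : R) (c : nat -> R) (delta : R -> nat -> R) (n : nat) :
  (forall l, 0 < Rabs (IZR l) <= 2 ^ (n + 1) -> 0 < dist_int (alpha * IZR l)) ->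
  down_ray (admissible alpha c delta 1 n).
Proof.
  intros Hdist.
  set (B := fun l => Rmax (Phi l 1 (delta 1 n)) (Phi l (-1) (delta (-1) n))).
  apply (down_ray_ext (fun d => d <= delta 1 n /\
           forall l, In l (nonzero_range (2 ^ (n + 1))) ->
             Phi l 1 d / dist_int (alpha * IZR l) * g c n l <= B l)).
  - intros d. unfold admissible. setoid_rewrite In_nonzero_range. rewrite INR_pow2.
    apply and_iff_compat_l. split; intros H l Hl.
    + split; [apply Hdist, Hl | apply H, Hl].
    + apply H, Hl.
  - apply down_ray_and_Forall; [apply down_ray_le |]. intros l Hl.
    rewrite In_nonzero_range, INR_pow2 in Hl.
    set (a := 2 * PI * Rabs (IZR l)). set (K := g c n l / dist_int (alpha * IZR l)).
    exists (ln (B l / K) / a). intros d.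
    replace (Phi l 1 d / dist_int (alpha * IZR l) * g c n l) with (exp (a * d) * K)
      by (unfold K, a, Rdiv; rewrite Phi_S0 by exact S0_1; ring).
    apply exp_mul_le_iff.
    + pose proof PI_RGT_0. unfold a. apply Rmult_lt_0_compat; lra.
    + apply Rdiv_lt_0_compat; [apply g_pos | apply Hdist]; exact Hl.
    + unfold B. eapply Rlt_le_trans; [apply exp_pos | apply Rmax_l].
Qed.

(** * Bryuno implies weak-Bryuno *)

Definition bryuno_term (alpha : R) (k : nat) : R := / 2 ^ k * ln (/ Omega alpha (2 ^ k)).

Lemma bryuno_term_ge0 (alpha : R) (k : nat) :
  0 < Omega alpha (2 ^ k) -> 0 <= bryuno_term alpha k.
Proof.
  intros H. apply Rmult_le_pos.
  - left. apply Rinv_0_lt_compat, pow_lt. lra.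
  - apply ln_inv_ge0. split; [exact H | apply Omega_le_1].
Qed.

Lemma exp_bryuno_term (alpha : R) (k : nat) :
  0 < Omega alpha (2 ^ k) -> exp (- (2 ^ k * bryuno_term alpha k)) = Omega alpha (2 ^ k).
Proof.
  intros H. unfold bryuno_term.
  rewrite <- Rmult_assoc, Rinv_r, Rmult_1_l by (apply pow_nonzero; lra).
  apply exp_neg_ln_inv, H.
Qed.

Lemma exp_decay_mul_g_le_dist (alpha : R) (n : nat) (l : Z) :
  0 < Omega alpha (2 ^ n) -> 0 < Omega alpha (2 ^ (n + 1)) ->
  0 < Rabs (IZR l) <= 2 ^ (n + 1) ->
  exp (- (2 * PI * Rabs (IZR l) * bryuno_term alpha (n + 1))) * g (bryuno_term alpha) n l
    <= dist_int (alpha * IZR l).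
Proof.
  intros Hn Hn1 Hl.
  pose proof (bryuno_term_ge0 _ _ Hn1) as Ht. pose proof PI2_1 as HPI.
  destruct (Rlt_dec (2 ^ n) (Rabs (IZR l))) as [Hshell | Hinner].
  - rewrite g_shell, Rmult_1_r by lra.
    apply Rle_trans with (Omega alpha (2 ^ (n + 1))).
    + rewrite <- exp_bryuno_term by exact Hn1.
      apply exp_le_compat, Ropp_le_contravar, Rmult_le_compat_r; [exact Ht |].
      rewrite pow_add. simpl. nra.
    + apply Omega_le_dist. rewrite INR_pow2. exact Hl.
  - rewrite g_inner, exp_bryuno_term by lra.
    apply Rle_trans with (1 * Omega alpha (2 ^ n)).
    + apply Rmult_le_compat_r; [lra |]. rewrite <- exp_0. apply exp_le_compat.
      pose proof (Rabs_pos (IZR l)). assert (0 <= PI * Rabs (IZR l)) by nra. nra.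
    + rewrite Rmult_1_l. apply Omega_le_dist. rewrite INR_pow2. lra.
Qed.

Lemma admissible_sub_bryuno_term (alpha x : R) (n : nat) :
  0 < Omega alpha (2 ^ n) -> 0 < Omega alpha (2 ^ (n + 1)) ->
  admissible alpha (bryuno_term alpha) (fun _ _ => x) 1 n (x - bryuno_term alpha (n + 1)).
Proof.
  intros Hn Hn1. split; [pose proof (bryuno_term_ge0 _ _ Hn1); lra |].
  intros l Hl.
  assert (HD : 0 < dist_int (alpha * IZR l)).
  { eapply Rlt_le_trans; [exact Hn1 |]. apply Omega_le_dist. rewrite INR_pow2. exact Hl. }
  split; [exact HD |].
  rewrite !Phi_S0 by (exact S0_1 || exact S0_m1). rewrite Rmax_left by lra.
  set (a := 2 * PI * Rabs (IZR l)). set (t := bryuno_term alpha (n + 1)).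
  replace (exp (a * (x - t)) / dist_int (alpha * IZR l) * g (bryuno_term alpha) n l)
    with (exp (a * x) * (exp (- (a * t)) * g (bryuno_term alpha) n l) / dist_int (alpha * IZR l)).
  2: { replace (a * (x - t)) with (a * x + - (a * t)) by ring.
       rewrite exp_plus. unfold Rdiv. ring. }
  apply Rle_div_l; [exact HD |].
  apply Rmult_le_compat_l; [left; apply exp_pos |].
  apply exp_decay_mul_g_le_dist; assumption.
Qed.

(* The paper's delta_(beta,n), chosen independent of beta, so that it is also its own tilde. *)
Fixpoint bryuno_delta (alpha dd : R) (N n : nat) : R :=
  match n with
  | O => dd
  | S k =>
      if (k <? N)%nat then dd
      else ray_max (admissible alpha (bryuno_term alpha)
                      (fun _ _ => bryuno_delta alpha dd N k) 1 k)
  end.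

Lemma sub_sum_n_m_le_of_steps (x s : nat -> R) (N : nat) :
  (forall n, (N <= n)%nat -> x n - s n <= x (S n)) ->
  forall n, (N <= n)%nat -> x N - sum_n_m s N n <= x (S n).
Proof.
  intros Hstep n Hn. induction Hn as [| n Hn IH].
  - rewrite sum_n_n. apply Hstep. lia.
  - rewrite sum_n_Sm by lia. pose proof (Hstep (S n) ltac:(lia)).
    unfold plus. simpl. lra.
Qed.

Section BryunoDelta.

Variables (alpha dd : R) (N : nat).
Hypothesis Omega_pow2_pos : forall k, 0 < Omega alpha (2 ^ k).

Local Notation D := (bryuno_delta alpha dd N).

Lemma bryuno_delta_init (n : nat) : (n <= N)%nat -> D n = dd.
Proof.
  destruct n as [| n]; [reflexivity |]. intros Hn. simpl.
  replace (n <? N)%nat with true by (symmetry; apply Nat.ltb_lt; lia). reflexivity.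
Qed.

Lemma bryuno_delta_maxP (n : nat) : (N <= n)%nat ->
  forall d, admissible alpha (bryuno_term alpha) (fun _ _ => D n) 1 n d <-> d <= D (S n).
Proof.
  intros Hn. simpl. replace (n <? N)%nat with false by (symmetry; apply Nat.ltb_ge; exact Hn).
  apply ray_maxP, admissible_down_ray. intros l Hl.
  eapply Rlt_le_trans; [apply Omega_pow2_pos |]. apply Omega_le_dist. rewrite INR_pow2. exact Hl.
Qed.

Lemma bryuno_delta_recursion :
  delta_recursion alpha dd (bryuno_term alpha) N (fun _ k => D k) (fun _ k => D k).
Proof.
  split; [| split].
  - intros beta n _ Hn. apply bryuno_delta_init. lia.
  - intros beta n Hb Hn. rewrite Nat.add_1_r.
    setoid_rewrite (admissible_S0 _ _ D _ _ _ Hb). split.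
    + apply (bryuno_delta_maxP n Hn). lra.
    + apply (bryuno_delta_maxP n Hn).
  - intros beta n Hb _. split; [intros; lra |].
    exists beta. rewrite Rminus_diag, Rabs_R0.
    split; [exact Hb | split; [apply exp_pos | reflexivity]].
Qed.

Lemma bryuno_delta_lower_bound (n : nat) : (N <= n)%nat ->
  dd - sum_n_m (fun k => bryuno_term alpha (k + 1)) N n <= D (S n).
Proof.
  intros Hn. rewrite <- (bryuno_delta_init N (le_n N)) at 1.
  apply sub_sum_n_m_le_of_steps; [| exact Hn]. intros k Hk.
  apply (bryuno_delta_maxP k Hk), admissible_sub_bryuno_term; apply Omega_pow2_pos.
Qed.

End BryunoDelta.

Theorem Bryuno_weak_Bryuno (alpha : R) : Bryuno alpha -> weak_Bryuno alpha.
Proof.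
  intros [Hpos Hser] dd Hdd.
  assert (Omega_pow2_pos : forall k, 0 < Omega alpha (2 ^ k)).
  { intros [| k]; [| apply Hpos; lia].
    eapply Rlt_le_trans; [apply (Hpos 1%nat (le_n 1)) | apply Omega_antimono; simpl; lia]. }
  destruct (Cauchy_ex_series _ Hser (mkposreal (dd / 2) ltac:(lra))) as [N0 Htail].
  exists 1. split; [lra |].
  exists (bryuno_term alpha). split; [intros n; apply bryuno_term_ge0, Omega_pow2_pos |]. split.
  { apply ex_series_incr_1.
    apply (ex_series_ext (fun k => bryuno_term alpha (k + 1))); [| exact Hser].
    intros k. rewrite Nat.add_1_r. reflexivity. }
  exists (S N0). split; [lia |].
  exists (fun _ k => bryuno_delta alpha dd (S N0) k), (fun _ k => bryuno_delta alpha dd (S N0) k).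
  split; [apply bryuno_delta_recursion, Omega_pow2_pos |].
  exists (dd / 2). split; [lra |]. intros beta n _ _.
  destruct (le_lt_dec n (S N0)) as [Hle | Hgt].
  - rewrite bryuno_delta_init by exact Hle. lra.
  - destruct n as [| n]; [lia |].
    eapply Rle_trans;
      [| exact (bryuno_delta_lower_bound alpha dd (S N0) Omega_pow2_pos n ltac:(lia))].
    pose proof (Htail (S N0) n ltac:(lia) ltac:(lia)) as Hsmall.
    apply Rabs_def2 in Hsmall. apply Rle_trans with (dd - dd / 2); [lra |].
    apply Rplus_le_compat_l, Ropp_le_contravar, Rlt_le, Hsmall.
Qed.

(** * Weak-Bryuno implies Bryuno *)

Lemma ex_series_of_halving_steps (t m : nat -> R) (N : nat) (B : R) :
  (forall k, 0 <= t k) -> (forall k, (N <= k)%nat -> B <= m k) ->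
  (forall k, (N <= k)%nat -> t (S k) <= t k / 2 + (m k - m (S k))) ->
  ex_series t.
Proof.
  intros Ht HB Hstep.
  assert (Hinv : forall n, (N <= n)%nat ->
            sum_n t n + t n <= sum_n t N + t N + 2 * (m N - m n)).
  { intros n Hn. induction Hn as [| n Hn IH]; [lra |].
    rewrite sum_Sn. unfold plus. simpl. pose proof (Hstep n Hn). lra. }
  assert (Hgrow : Un_growing (sum_n t)).
  { intros n. rewrite sum_Sn. unfold plus. simpl. pose proof (Ht (S n)). lra. }
  destruct (ex_finite_lim_seq_incr (sum_n t) (sum_n t N + t N + 2 * (m N - B)) Hgrow)
    as [l Hl]; [| exists l; exact Hl].
  intros n. apply Rle_trans with (sum_n t (max n N)).
  - apply Rge_le, growing_prop; [exact Hgrow | lia].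
  - pose proof (Hinv (max n N) (Nat.le_max_r n N)).
    pose proof (Ht (max n N)). pose proof (HB (max n N) (Nat.le_max_r n N)). lra.
Qed.

Definition delta_max (delta : R -> nat -> R) (n : nat) : R := Rmax (delta 1 n) (delta (-1) n).

Section WeakBryuno.

Variables (alpha dd : R) (c : nat -> R) (N : nat) (delta deltat : R -> nat -> R).
Hypothesis Hrec : delta_recursion alpha dd c N delta deltat.

Lemma delta_succ_le_tilde (beta : R) (n : nat) : S0 beta -> (N <= n)%nat ->
  delta beta (n + 1) <= deltat beta (n + 1).
Proof.
  intros Hb Hn. destruct Hrec as [_ [_ Hmin]].
  apply (proj1 (Hmin beta n Hb Hn) beta Hb).
  rewrite Rminus_diag, Rabs_R0. apply exp_pos.
Qed.

Lemma tilde_admissible (beta : R) (n : nat) : S0 beta -> (N <= n)%nat ->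
  admissible alpha c delta beta n (deltat beta (n + 1)).
Proof. intros Hb Hn. destruct Hrec as [_ [Hmax _]]. apply (Hmax beta n Hb Hn). Qed.

Lemma delta_succ_le (beta : R) (n : nat) : S0 beta -> (N <= n)%nat ->
  delta beta (n + 1) <= delta beta n.
Proof.
  intros Hb Hn. eapply Rle_trans; [apply delta_succ_le_tilde; assumption |].
  apply (tilde_admissible beta n Hb Hn).
Qed.

Lemma delta_max_succ_le (n : nat) : (N <= n)%nat -> delta_max delta (n + 1) <= delta_max delta n.
Proof.
  intros Hn. unfold delta_max. apply Rmax_lub.
  - eapply Rle_trans; [apply (delta_succ_le 1 n S0_1 Hn) | apply Rmax_l].
  - eapply Rle_trans; [apply (delta_succ_le (-1) n S0_m1 Hn) | apply Rmax_r].
Qed.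

Lemma recursion_dist_pos (l : Z) : l <> 0%Z -> 0 < dist_int (alpha * IZR l).
Proof.
  intros Hl. set (n := (N + Z.abs_nat l)%nat).
  apply (tilde_admissible 1 n S0_1 ltac:(lia)). split.
  - apply Rabs_pos_lt, not_0_IZR, Hl.
  - rewrite Rabs_Zabs, <- Zabs2Nat.id_abs, <- INR_IZR_INZ, <- INR_pow2. apply le_INR.
    pose proof (Nat.pow_gt_lin_r 2 (n + 1)). lia.
Qed.

Lemma recursion_Omega_pos (M : nat) : 0 < Omega alpha M.
Proof.
  apply Omega_pos. intros l [Hl _]. apply recursion_dist_pos.
  intros ->. rewrite Rabs_R0 in Hl. lra.
Qed.

Lemma exp_delta_succ_le (beta : R) (n : nat) (l : Z) : S0 beta -> (N <= n)%nat ->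
  2 ^ n < Rabs (IZR l) <= 2 ^ (n + 1) ->
  exp (2 * PI * Rabs (IZR l) * delta beta (n + 1))
    <= dist_int (alpha * IZR l) * exp (2 * PI * Rabs (IZR l) * delta_max delta n).
Proof.
  intros Hb Hn Hl. set (a := 2 * PI * Rabs (IZR l)).
  assert (Ha : 0 <= a).
  { pose proof PI_RGT_0. pose proof (Rabs_pos (IZR l)). unfold a. nra. }
  assert (Hl' : 0 < Rabs (IZR l) <= 2 ^ (n + 1)) by (pose proof (pow_lt 2 n); lra).
  destruct (proj2 (tilde_admissible beta n Hb Hn) l Hl') as [HD Hadm].
  rewrite g_shell, Rmult_1_r, !Phi_S0 in Hadm by (exact Hb || exact S0_1 || exact S0_m1 || lra).
  fold a in Hadm.
  apply Rle_trans with (exp (a * deltat beta (n + 1))).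
  { apply exp_le_compat, Rmult_le_compat_l; [exact Ha |]. apply delta_succ_le_tilde; assumption. }
  rewrite (Rmult_comm (dist_int _)). apply Rle_div_l; [exact HD |].
  eapply Rle_trans; [exact Hadm |].
  apply Rmax_lub; apply exp_le_compat, Rmult_le_compat_l; try exact Ha; unfold delta_max.
  - apply Rmax_l.
  - apply Rmax_r.
Qed.

Lemma ln_inv_dist_le (n : nat) (l : Z) : (N <= n)%nat ->
  2 ^ n < Rabs (IZR l) <= 2 ^ (n + 1) ->
  ln (/ dist_int (alpha * IZR l))
    <= 2 * PI * Rabs (IZR l) * (delta_max delta n - delta_max delta (n + 1)).
Proof.
  intros Hn Hl. set (a := 2 * PI * Rabs (IZR l)).
  assert (HD : 0 < dist_int (alpha * IZR l)).
  { apply recursion_dist_pos. intros ->. rewrite Rabs_R0 in Hl. pose proof (pow_lt 2 n). lra. }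
  assert (Hexp : exp (a * delta_max delta (n + 1))
                   <= dist_int (alpha * IZR l) * exp (a * delta_max delta n)).
  { unfold delta_max at 1. apply Rmax_case; apply exp_delta_succ_le; auto using S0_1, S0_m1. }
  apply ln_le in Hexp; [| apply exp_pos].
  rewrite ln_mult, !ln_exp in Hexp by (apply exp_pos || exact HD).
  rewrite ln_Rinv by exact HD. lra.
Qed.

Lemma bryuno_term_succ_le (k : nat) : (N <= k)%nat ->
  bryuno_term alpha (k + 1)
    <= bryuno_term alpha k / 2 + 2 * PI * (delta_max delta k - delta_max delta (k + 1)).
Proof.
  intros Hk.
  assert (Hdec : 0 <= delta_max delta k - delta_max delta (k + 1))
    by (pose proof (delta_max_succ_le k Hk); lra).
  assert (HPI := PI_RGT_0).
  pose proof (bryuno_term_ge0 alpha k (recursion_Omega_pos _)) as Ht.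
  assert (Hpow : (2 ^ k <= 2 ^ (k + 1))%nat) by (apply Nat.pow_le_mono_r; lia).
  destruct (Omega_extend_cases alpha _ _ Hpow) as [E | [l [Hl E]]];
    unfold bryuno_term at 1; rewrite E.
  - enough (/ 2 ^ (k + 1) * ln (/ Omega alpha (2 ^ k)) = bryuno_term alpha k / 2) by nra.
    unfold bryuno_term. rewrite pow_add. field. apply pow_nonzero. lra.
  - rewrite !INR_pow2 in Hl. pose proof (ln_inv_dist_le k l Hk Hl).
    assert (Hinv : 0 < / 2 ^ (k + 1)) by (apply Rinv_0_lt_compat, pow_lt; lra).
    assert (Hx : / 2 ^ (k + 1) * Rabs (IZR l) <= 1).
    { rewrite Rmult_comm. apply Rle_div_l; [apply pow_lt; lra | lra]. }
    set (dM := delta_max delta k - delta_max delta (k + 1)) in *.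
    assert (0 <= 2 * PI * dM) by nra.
    nra.
Qed.

End WeakBryuno.

Theorem weak_Bryuno_Bryuno (alpha : R) : weak_Bryuno alpha -> Bryuno alpha.
Proof.
  intros W.
  destruct (W 1 Rlt_0_1)
    as (_ & _ & c & _ & _ & N & HN & delta & deltat & Hrec & eps & _ & Hlb).
  pose proof (recursion_Omega_pos _ _ _ _ _ _ Hrec) as Omega_pos_all.
  split; [intros k _; apply Omega_pos_all |].
  apply (ex_series_ext (fun k => bryuno_term alpha (S k)));
    [intros k; rewrite Nat.add_1_r; reflexivity |].
  apply (ex_series_incr_1 (bryuno_term alpha)).
  apply (ex_series_of_halving_steps _ (fun k => 2 * PI * delta_max delta k) N (2 * PI * eps)).
  - intros k. apply bryuno_term_ge0, Omega_pos_all.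
  - intros k Hk. apply Rmult_le_compat_l; [pose proof PI_RGT_0; lra |].
    eapply Rle_trans; [apply (Hlb 1 k S0_1); lia | apply Rmax_l].
  - intros k Hk. rewrite <- Nat.add_1_r.
    eapply Rle_trans; [apply (bryuno_term_succ_le _ _ _ _ _ _ Hrec k Hk) | right; ring].
Qed.

Theorem mainTheorem3 (alpha : R) : weak_Bryuno alpha <-> Bryuno alpha.
Proof. split; [apply weak_Bryuno_Bryuno | apply Bryuno_weak_Bryuno]. Qed.
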